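(* Let $X$ be a real Hilbert space, $n\in\{3,4,\ldots\}$, $U_1,\ldots,U_n$ closed linear subspaces of $X$, $P_i:=P_{U_i}$, $Z:=U_1\cap\cdots\cap U_n$. Define $M\colon X^{n-1}\to X^n$ by $M(z_1,\ldots,z_{n-1})=(x_1,\ldots,x_n)$ with $x_1=P_1z_1$, $x_i=P_i(x_{i-1}+z_i-z_{i-1})$ for $2\le i\le n-1$, $x_n=P_n(x_1+x_{n-1}-z_{n-1})$, and define $T\colon X^{n-1}\to X^{n-1}$ by $T\mathbf z=\mathbf z+\big((Q_2-Q_1)M\mathbf z,\ldots,(Q_n-Q_{n-1})M\mathbf z\big)$, where $Q_i\colon X^n\to X$ is the $i$-th coordinate map. Let \[ \Psi\colon U_1^\perp\times\cdots\times U_{n-1}^\perp\to X^{n-1},\quad (y_1,\ldots,y_{n-1})\mapsto(y_1,\,y_1+y_2,\,\ldots,\,y_1+\cdots+y_{n-1}). \] Then $\Psi$ is a continuous linear operator with closed range, and \[ \operatorname{Fix}T=\{(z,\ldots,z)\in X^{n-1}: z\in Z\}\oplus E, \] where \[ E:=\operatorname{ran}\Psi\cap(X^{n-2}\times U_n^\perp)\subseteq U_1^\perp\times(U_1^\perp+U_2^\perp)\times\cdots\times(U_1^\perp+\cdots+U_{n-2}^\perp)\times\big((U_1^\perp+\cdots+U_{n-1}^\perp)\cap U_n^\perp\big). \] Moreover, for $\mathbf z=(z_1,\ldots,z_{n-1})\in X^{n-1}$ and $\bar z=(z_1+\cdots+z_{n-1})/(n-1)$, \[ P_{\operatorname{Fix}T}\mathbf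 z=(P_Z\bar z,\ldots,P_Z\bar z)\oplus P_E\mathbf z, \] and hence $P_1\big(Q_1P_{\operatorname{Fix}T}\mathbf z\big)=P_Z\bar z$, where here $Q_1$ denotes the first-coordinate map on $X^{n-1}$.
   Context: $P_S$ denotes the orthogonal projection onto a closed linear subspace (or closed convex set) $S$; $\oplus$ denotes a sum of mutually orthogonal vectors or subspaces; $\operatorname{ran}$ denotes range. *)

(* Real Hilbert space = complete normed module over a
   realType whose norm comes from an (explicitly given) inner product. *)
From Stdlib Require Import ClassicalEpsilon.
From mathcomp Require Import all_boot all_algebra.
From mathcomp Require Import all_classical all_reals all_analysis.
Import GRing.Theory Num.Theory.
Local Open Scope ring_scope.
Local Open Scope classical_set_scope.

Set Implicit Arguments.
Unset Strict Implicit.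
Unset Printing Implicit Defensive.

Definition inner_product {R : realType} {X : normedModType R}
  (ip : X -> X -> R) : Prop :=
  [/\ (forall x y, ip x y = ip y x),
      (forall (a : R) x y z, ip (a *: x + y) z = a * ip x z + ip y z),
      (forall x, 0 <= ip x x) &
      (forall x, `|x| = Num.sqrt (ip x x))].

Definition hclosed_subspace {R : realType} {X : normedModType R} (U : set X) : Prop :=
  [/\ U 0, (forall (a : R) x y, U x -> U y -> U (a *: x + y)) & closed U].

Definition hperp {R : realType} {X : lmodType R} (ip : X -> X -> R) (U : set X) : set X :=
  [set x | forall u, U u -> ip x u = 0].

(* metric projection (nearest point) onto S w.r.t. the norm induced by ipV;
   the chosen nearest point (any value if none exists). *)
Definition hproj {R : realType} {V : lmodType R} (ipV : V -> V -> R) (S : set V) (v : V) : V :=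
  epsilon (inhabits 0)
    (fun p => S p /\ forall s, S s -> ipV (v - p) (v - p) <= ipV (v - s) (v - s)).

(* inner product of the Hilbert direct sum X^k, elements are 'I_k -> X *)
Definition ipn {R : realType} {X : lmodType R} (ip : X -> X -> R) (k : nat)
  (z w : 'I_k -> X) : R := \sum_(i < k) ip (z i) (w i).

Definition ip_closed {R : realType} {V : lmodType R} (ipV : V -> V -> R) (S : set V) : Prop :=
  forall v, (forall e : R, 0 < e -> exists s, S s /\ Num.sqrt (ipV (v - s) (v - s)) < e) -> S v.

Definition ip_continuous_on {R : realType} {A B : lmodType R}
  (ipA : A -> A -> R) (ipB : B -> B -> R) (D : set A) (f : A -> B) : Prop :=
  forall v, D v -> forall e : R, 0 < e -> exists d : R, 0 < d /\
    forall w, D w -> Num.sqrt (ipA (v - w) (v - w)) < d ->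
      Num.sqrt (ipB (f v - f w) (f v - f w)) < e.

Definition linear_on {R : realType} {A B : lmodType R} (D : set A) (f : A -> B) : Prop :=
  forall (a : R) v w, D v -> D w -> f (a *: v + w) = a *: f v + f w.

(* 1-based coordinate j (1 <= j <= k) of z in X^k; 0 for j > k (only used with j >= 1) *)
Definition hcoord {X : zmodType} {k : nat} (z : 'I_k -> X) (j : nat) : X :=
  match (insub j.-1 : option 'I_k) with Some i => z i | None => 0 end.

Fixpoint Mseq {X : zmodType} (P : nat -> X -> X) (z : nat -> X) (k : nat) : X :=
  match k with
  | 0 => 0
  | S j => if j is 0 then P 1%N (z 1%N) else P k (Mseq P z j + z k - z j)
  end.

Definition Mmap {X : zmodType} (P : nat -> X -> X) (n : nat) (z : 'I_n.-1 -> X)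
  : 'I_n -> X :=
  fun i => let zz := hcoord z in
    if i.+1 == n then P n (Mseq P zz 1%N + Mseq P zz n.-1 - zz n.-1)
    else Mseq P zz i.+1.

Definition Tmap {X : zmodType} (P : nat -> X -> X) (n : nat) (z : 'I_n.-1 -> X)
  : 'I_n.-1 -> X :=
  fun i => let x := hcoord (Mmap P z) in z i + (x i.+2 - x i.+1).

Definition Psi {X : zmodType} (k : nat) (y : 'I_k -> X) : 'I_k -> X :=
  fun i => \sum_(j < k | (j <= i)%N) y j.

Definition sum_perps {R : realType} {X : lmodType R} (ip : X -> X -> R)
  (U : nat -> set X) (k : nat) : set X :=
  [set x | exists y : nat -> X,
     (forall j, (1 <= j <= k)%N -> hperp ip (U j) (y j)) /\
     x = \sum_(1 <= j < k.+1) y j].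

From Stdlib Require Import ClassicalEpsilon.
From mathcomp Require Import all_boot all_order all_algebra.
From mathcomp Require Import all_classical all_reals all_analysis.
From mathcomp Require Import ring lra zify.
Import Order.TTheory GRing.Theory Num.Theory.
Local Open Scope ring_scope.
Local Open Scope classical_set_scope.
Set Implicit Arguments.
Unset Strict Implicit.
Unset Printing Implicit Defensive.

(* A point z is fixed by T iff all coordinates of x = M z coincide, say with w.
   Unwinding the recursion defining x, and using that P_i v = w iff w is in U_i
   and v - w is orthogonal to U_i, this happens iff w is in Z and b = z - (w,...,w)
   has its successive differences in U_1^perp, ..., U_{n-1}^perp and its last
   coordinate in U_n^perp.  Since taking differences inverts Psi, this says that
   b is in E, so Fix T = Delta + E with Delta the diagonal of Z.  Every coordinate
   of Psi y is a sum of vectors orthogonal to Z, hence Delta is orthogonal to E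
   and P_{Fix T} = P_Delta + P_E; moreover P_Delta z = (P_Z zbar, ..., P_Z zbar)
   because <z, (w,...,w)> = <z_1 + ... + z_{n-1}, w>.  The first coordinate of
   P_E z lies in U_1^perp, so P_1 maps P_Z zbar + (P_E z)_1 back to P_Z zbar.
   The difference operator is bounded, which makes ran Psi and E closed, and the
   projections onto closed subspaces of the complete spaces X and X^{n-1} exist by
   the minimizing-sequence argument. *)

Lemma eventually_inv_succ_lt (R : realType) (e : R) : 0 < e ->
  exists N : nat, forall m, (N <= m)%N -> (m.+1%:R : R)^-1 < e.
Proof.
move=> e0; exists (Num.Def.archi_bound e^-1) => m Nm.
have /archi_boundP lt_e_bound : 0 <= e^-1 by rewrite invr_ge0 ltW.
have lt_e_m : e^-1 < m.+1%:R by apply: (lt_le_trans lt_e_bound); rewrite ler_nat leqW.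
by rewrite -[e]invrK ltf_pV2 ?posrE ?invr_gt0 ?ltr0Sn.
Qed.

Lemma sqrtr_lt_sqr (R : realType) (a e : R) : 0 < e -> a < e ^+ 2 -> Num.sqrt a < e.
Proof.
move=> e0 lt_a_e; rewrite -[ltRHS](ger0_norm (ltW e0)) -sqrtr_sqr ltr_sqrt //.
exact: exprn_gt0.
Qed.

Lemma sqr_gt_of_sqrtr_lt (R : realType) (a e : R) :
  0 <= a -> Num.sqrt a < e -> a < e ^+ 2.
Proof.
move=> a0 lt_a_e; have e0 : 0 <= e by apply: le_trans (ltW lt_a_e); exact: sqrtr_ge0.
by rewrite -(sqr_sqrtr a0) ltr_pXn2r ?nnegrE ?sqrtr_ge0.
Qed.

Section InnerProduct.
Variables (R : realType) (V : lmodType R) (ipV : V -> V -> R).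

Definition ip_axioms := [/\ forall x y, ipV x y = ipV y x,
  forall (a : R) x y z, ipV (a *: x + y) z = a * ipV x z + ipV y z,
  forall x, 0 <= ipV x x & forall x, ipV x x = 0 -> x = 0].

Definition nsq x := ipV x x.

Definition subsp (S : set V) := S 0 /\ forall a x y, S x -> S y -> S (a *: x + y).

Definition ip_cauchy (u : nat -> V) := forall e : R, 0 < e ->
  exists N, forall m k, (N <= m)%N -> (N <= k)%N -> nsq (u m - u k) < e.

Definition ip_cvg (u : nat -> V) l := forall e : R, 0 < e ->
  exists N, forall m, (N <= m)%N -> nsq (u m - l) < e.

Definition ip_complete := forall u, ip_cauchy u -> exists l, ip_cvg u l.

Definition orth_proj (S : set V) v p := S p /\ forall s, S s -> ipV (v - p) s = 0.

Hypothesis H : ip_axioms.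

Lemma ipC x y : ipV x y = ipV y x. Proof. by case: H. Qed.
Lemma ipL a x y z : ipV (a *: x + y) z = a * ipV x z + ipV y z. Proof. by case: H. Qed.
Lemma nsq_ge0 x : 0 <= nsq x. Proof. by rewrite /nsq; case: H. Qed.
Lemma nsq_eq0 x : nsq x = 0 -> x = 0. Proof. by case: H => _ _ _; apply. Qed.

Lemma ip0l z : ipV 0 z = 0.
Proof. have := ipL 1 0 0 z; rewrite scaler0 addr0 mul1r; lra. Qed.
Lemma ipDl x y z : ipV (x + y) z = ipV x z + ipV y z.
Proof. by have := ipL 1 x y z; rewrite scale1r mul1r. Qed.
Lemma ipZl a x z : ipV (a *: x) z = a * ipV x z.
Proof. by have := ipL a x 0 z; rewrite addr0 ip0l addr0. Qed.
Lemma ipNl x z : ipV (- x) z = - ipV x z.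
Proof. by rewrite -scaleN1r ipZl mulN1r. Qed.
Lemma ipBl x y z : ipV (x - y) z = ipV x z - ipV y z.
Proof. by rewrite ipDl ipNl. Qed.
Lemma ip0r z : ipV z 0 = 0. Proof. by rewrite ipC ip0l. Qed.
Lemma ipDr x y z : ipV z (x + y) = ipV z x + ipV z y.
Proof. by rewrite ipC ipDl !(ipC z). Qed.
Lemma ipZr a x z : ipV z (a *: x) = a * ipV z x.
Proof. by rewrite ipC ipZl ipC. Qed.
Lemma ipNr x z : ipV z (- x) = - ipV z x.
Proof. by rewrite ipC ipNl ipC. Qed.
Lemma ipBr x y z : ipV z (x - y) = ipV z x - ipV z y.
Proof. by rewrite ipDr ipNr. Qed.
Lemma ip_suml I (r : seq I) (P : pred I) (F : I -> V) z :
  ipV (\sum_(i <- r | P i) F i) z = \sum_(i <- r | P i) ipV (F i) z.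
Proof. exact: (big_morph (ipV^~ z) (fun x y => ipDl x y z) (ip0l z)). Qed.
Lemma ip_sumr I (r : seq I) (P : pred I) (F : I -> V) z :
  ipV z (\sum_(i <- r | P i) F i) = \sum_(i <- r | P i) ipV z (F i).
Proof. exact: (big_morph (ipV z) (fun x y => ipDr x y z) (ip0r z)). Qed.

Lemma nsqD x y : nsq (x + y) = nsq x + 2 * ipV x y + nsq y.
Proof. rewrite /nsq ipDl !ipDr (ipC y x); lra. Qed.
Lemma nsqB x y : nsq (x - y) = nsq x - 2 * ipV x y + nsq y.
Proof. rewrite /nsq ipBl !ipBr (ipC y x); lra. Qed.
Lemma nsqN x : nsq (- x) = nsq x.
Proof. by rewrite /nsq ipNl ipNr opprK. Qed.
Lemma nsqZ a x : nsq (a *: x) = a ^+ 2 * nsq x.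
Proof. by rewrite /nsq ipZl ipZr mulrA expr2. Qed.
Lemma nsq0 : nsq 0 = 0.
Proof. by rewrite /nsq ip0l. Qed.

Lemma nsqD_le x y : nsq (x + y) <= 2 * nsq x + 2 * nsq y.
Proof. have := nsqB x y; have := nsqD x y; have := nsq_ge0 (x - y); lra. Qed.

Lemma ip_young t x y : 0 < t -> 2 * ipV x y <= t * nsq x + nsq y / t.
Proof.
move=> t0; have := nsq_ge0 (t *: x - y); rewrite nsqB nsqZ ipZl => h.
have -> : t * nsq x + nsq y / t = (t ^+ 2 * nsq x + nsq y) / t.
  by field; rewrite lt0r_neq0.
rewrite ler_pdivlMr //; lra.
Qed.

Lemma ip_cauchy_schwarz x y : ipV x y ^+ 2 <= nsq x * nsq y.
Proof.
have [/nsq_eq0 ->|yn0] := eqVneq (nsq y) 0.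
  by rewrite ip0r expr0n mulr_ge0 ?nsq_ge0.
have y0 : 0 < nsq y by rewrite lt_def yn0 nsq_ge0.
have := nsq_ge0 (nsq y *: x - ipV x y *: y).
rewrite nsqB !nsqZ ipZl ipZr => h.
by rewrite -subr_ge0 -(pmulr_rge0 _ y0); move: h; rewrite /nsq; nra.
Qed.

(* the closed ball of radius sqrt c is closed *)
Lemma nsq_le_of_approx x c : 0 <= c ->
  (forall e, 0 < e -> exists y, nsq y <= c + e /\ nsq (x - y) <= e) -> nsq x <= c.
Proof.
move=> c0 approx; apply/ler_addgt0Pr => e e0.
pose t := Num.min 1 (e / (c + 4)).
have t0 : 0 < t by rewrite lt_min ltr01 divr_gt0 //; lra.
have t1 : t <= 1 by rewrite ge_min lexx.
have te : t * (c + 4) <= e by rewrite -ler_pdivlMr ?ge_min ?lexx ?orbT //; lra.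
have [y [ly lxy]] := approx _ (exprn_gt0 2 t0).
have := ip_young y (x - y) t0.
have -> : nsq x = nsq y + 2 * ipV y (x - y) + nsq (x - y) by rewrite -nsqD addrC subrK.
have lxy_t : nsq (x - y) / t <= t by rewrite ler_pdivrMr // -expr2.
have lty : t * nsq y <= t * (c + t ^+ 2) by rewrite ler_wpM2l // ltW.
have t2 : t ^+ 2 <= t by rewrite expr2 ger_pMl.
have t3 : t * t ^+ 2 <= t by nra.
nra.
Qed.

Lemma nsq_parallelogram x y : nsq (x + y) + nsq (x - y) = 2 * nsq x + 2 * nsq y.
Proof. rewrite nsqD nsqB; lra. Qed.

Lemma subspZ S a x : subsp S -> S x -> S (a *: x).
Proof. by case=> S0 SL Sx; rewrite -[_ *: _]addr0; apply: SL. Qed.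
Lemma subspD S x y : subsp S -> S x -> S y -> S (x + y).
Proof. by case=> S0 SL Sx Sy; rewrite -[x]scale1r; apply: SL. Qed.
Lemma subspN S x : subsp S -> S x -> S (- x).
Proof. by move=> SS Sx; rewrite -scaleN1r; apply: subspZ. Qed.
Lemma subspB S x y : subsp S -> S x -> S y -> S (x - y).
Proof. by move=> SS Sx Sy; apply: subspD => //; apply: subspN. Qed.

Lemma subsp_sum A B : subsp A -> subsp B -> subsp [set a + b | a in A & b in B].
Proof.
move=> SA SB; split; first by exists 0; [case: SA | exists 0; [case: SB | rewrite addr0]].
move=> c _ _ [a Aa [b Bb <-]] [a' Aa' [b' Bb' <-]].
exists (c *: a + a'); first by case: SA => _; apply.
exists (c *: b + b'); first by case: SB => _; apply.
by rewrite scalerDr addrACA.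
Qed.

Lemma hperp_subsp (U : set V) : subsp (hperp ipV U).
Proof.
split; first by move=> u _; rewrite ip0l.
by move=> a x y hx hy u Uu; rewrite ipL hx // hy // mulr0 addr0.
Qed.

Lemma hproj_eq S v p : subsp S -> orth_proj S v p -> hproj ipV S v = p.
Proof.
move=> SS [Sp orth].
have pythagoras s : S s -> nsq (v - s) = nsq (v - p) + nsq (p - s).
  move=> Ss; have -> : v - s = (v - p) + (p - s) by rewrite addrA subrK.
  by rewrite (nsqD (v - p)) orth ?mulr0 ?addr0 //; apply: subspB.
have := epsilon_spec (inhabits (0 : V))
  (fun q => S q /\ forall s, S s -> nsq (v - q) <= nsq (v - s)).
rewrite -/(hproj ipV S v); set q := hproj ipV S v; case=> [|Sq qmin].
  by exists p; split => // s Ss; rewrite (pythagoras s) // lerDl nsq_ge0.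
have := qmin p Sp; rewrite (pythagoras q) // gerDl => qp0.
apply/eqP; rewrite eq_sym -subr_eq0; apply/eqP/nsq_eq0/le_anti.
by rewrite qp0 nsq_ge0.
Qed.

Lemma orth_proj_of_min S v p : subsp S -> S p ->
  (forall s, S s -> nsq (v - p) <= nsq (v - s)) -> orth_proj S v p.
Proof.
move=> SS Sp pmin; split => // s Ss.
(* compare p with p + tau s; the + 1 in tau avoids a case split on s = 0 *)
pose c := ipV (v - p) s; pose tau := c / (nsq s + 1).
have s1 : 0 < nsq s + 1 by rewrite ltr_wpDl ?nsq_ge0.
have c_tau : c = tau * (nsq s + 1) by rewrite /tau mulfVK // lt0r_neq0.
have := pmin (p + tau *: s) (subspD SS Sp (subspZ tau SS Ss)).
rewrite opprD addrA (nsqB (v - p)) nsqZ ipZr -/c c_tau => h.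
have tau0 : tau = 0.
  apply/eqP; rewrite -sqrf_eq0 eq_le sqr_ge0 andbT.
  have := nsq_ge0 s; nra.
by rewrite tau0 mul0r.
Qed.

Lemma orth_proj_sum A B v p q : (forall a b, A a -> B b -> ipV a b = 0) ->
  orth_proj A v p -> orth_proj B v q ->
  orth_proj [set a + b | a in A & b in B] v (p + q).
Proof.
move=> AB [Ap pA] [Bq qB]; split; first by exists p => //; exists q.
move=> _ [a Aa [b Bb <-]].
rewrite ipDr; have -> : v - (p + q) = (v - p) - q by rewrite opprD addrA.
by rewrite ipBl pA // ipC AB // subrr add0r addrAC ipBl qB // AB // subrr.
Qed.

Section ProjectionTheorem.
Variables (S : set V) (v : V).
Hypotheses (SS : subsp S) (S_closed : ip_closed ipV S) (complete : ip_complete).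

Let D := [set nsq (v - s) | s in S].
Let d := inf D.

Let D_has_inf : has_inf D.
Proof.
split; first by exists (nsq (v - 0)), 0 => //; case: SS.
by exists 0 => _ [s _ <-]; exact: nsq_ge0.
Qed.

Let d_le s : S s -> d <= nsq (v - s).
Proof. by move=> Ss; apply: (ge_inf (proj2 D_has_inf)); exists s. Qed.

Let d_ge0 : 0 <= d.
Proof. by apply: lb_le_inf (proj1 D_has_inf) _ => _ [s _ <-]; exact: nsq_ge0. Qed.

Let d_approx k : exists s, S s /\ nsq (v - s) < d + k.+1%:R^-1.
Proof.
have k0 : 0 < k.+1%:R^-1 :> R by rewrite invr_gt0 ltr0Sn.
by have [_ [s Ss <-] ?] := inf_adherent k0 D_has_inf; exists s.
Qed.

(* parallelogram law applied to v - s, v - t and their midpoint *)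
Let close_of_near_d s t a b : S s -> S t ->
  nsq (v - s) <= d + a -> nsq (v - t) <= d + b -> nsq (s - t) <= 2 * a + 2 * b.
Proof.
move=> Ss St vs vt; pose m := 2^-1 *: (s + t).
have Sm : S m by apply: subspZ => //; apply: subspD.
have e1 : (v - s) + (v - t) = 2 *: (v - m).
  by rewrite scalerBr scalerA divff ?pnatr_eq0 // scale1r scaler_nat mulr2n opprD addrACA.
have e2 : (v - s) - (v - t) = - (s - t) by rewrite opprB addrC addrA subrK opprB.
have := nsq_parallelogram (v - s) (v - t); rewrite e1 e2 nsqZ nsqN.
have := d_le Sm; lra.
Qed.

Lemma orth_proj_exists : exists p, orth_proj S v p.
Proof.
have [u u_approx] := choice d_approx.
have u_cauchy : ip_cauchy u.
  move=> e e0; have e4 : 0 < e / 4 by rewrite divr_gt0.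
  have [N hN] := eventually_inv_succ_lt e4.
  exists N => m k Nm Nk; have [Sum lum] := u_approx m; have [Suk luk] := u_approx k.
  have := close_of_near_d Sum Suk (ltW lum) (ltW luk).
  have := hN m Nm; have := hN k Nk.
  move: (m.+1%:R^-1) (k.+1%:R^-1) => a b; lra.
have [l u_cvg] := complete u_cauchy.
have Sl : S l.
  apply: S_closed => e e0; have [N hN] := u_cvg _ (exprn_gt0 2 e0).
  exists (u N); split; first by case: (u_approx N).
  by apply: sqrtr_lt_sqr => //; change (nsq (l - u N) < e ^+ 2); rewrite -nsqN opprB hN.
exists l; apply: orth_proj_of_min => // s Ss.
apply: le_trans (d_le Ss); apply: nsq_le_of_approx d_ge0 _ => e e0.
have [N1 hN1] := eventually_inv_succ_lt e0; have [N2 hN2] := u_cvg e e0.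
have [_ luN] := u_approx (maxn N1 N2).
exists (v - u (maxn N1 N2)); split.
  by apply: ltW (lt_le_trans luN _); rewrite lerD2l ltW // hN1 // leq_maxl.
by rewrite opprB addrC addrA subrK ltW // hN2 // leq_maxr.
Qed.

End ProjectionTheorem.

Lemma hprojP S v : ip_complete -> subsp S -> ip_closed ipV S ->
  orth_proj S v (hproj ipV S v).
Proof.
move=> complete SS S_closed.
have [p vp] : exists p, orth_proj S v p by apply: orth_proj_exists.
by rewrite (hproj_eq SS vp).
Qed.

Lemma nsq_sum_le I (r : seq I) (P : pred I) (F : I -> V) :
  nsq (\sum_(j <- r | P j) F j) <= 2 ^+ size r * \sum_(j <- r | P j) nsq (F j).
Proof.
elim: r => [|a r IH]; first by rewrite !big_nil nsq0 mulr0.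
have r0 : 0 <= \sum_(j <- r | P j) nsq (F j) by apply: sumr_ge0 => j _; exact: nsq_ge0.
have r1 : 1 <= 2 ^+ size r :> R by rewrite exprn_ege1 // ler1n.
rewrite !big_cons /= exprS; case: (P a); last first.
  by apply: le_trans IH _; rewrite ler_wpM2r // ler_peMl ?exprn_ge0 // ler1n.
have := nsqD_le (F a) (\sum_(j <- r | P j) F j); have := nsq_ge0 (F a); nra.
Qed.

Lemma ip_closedI (I : Type) (F : I -> set V) :
  (forall i, ip_closed ipV (F i)) -> ip_closed ipV [set v | forall i, F i v].
Proof.
move=> F_closed v v_adh i; apply: F_closed => e e0.
by have [s [Fs vs]] := v_adh e e0; exists s.
Qed.

Lemma ip_closed_setI A B : ip_closed ipV A -> ip_closed ipV B -> ip_closed ipV (A `&` B).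
Proof.
move=> A_closed B_closed v v_adh; split; [apply: A_closed|apply: B_closed] => e e0;
  by have [s [[As Bs] vs]] := v_adh e e0; exists s.
Qed.

Lemma hperp_closed U : ip_closed ipV (hperp ipV U).
Proof.
move=> v v_adh u Uu; apply/eqP; rewrite -sqrf_eq0 eq_le sqr_ge0 andbT.
apply/ler_addgt0Pr => e e0; rewrite add0r.
have u1 : 0 < nsq u + 1 by rewrite ltr_wpDl ?nsq_ge0.
pose a := e / (nsq u + 1); have a0 : 0 < a by rewrite divr_gt0.
have ae : a * (nsq u + 1) = e by rewrite mulfVK // lt0r_neq0.
have sa0 : 0 < Num.sqrt a by rewrite sqrtr_gt0.
have [s [Us /(sqr_gt_of_sqrtr_lt (nsq_ge0 _)) vs]] := v_adh _ sa0.
rewrite sqr_sqrtr ?ltW // in vs.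
have -> : ipV v u = ipV (v - s) u by rewrite ipBl Us // subr0.
apply: le_trans (ip_cauchy_schwarz _ _) _.
have : nsq (v - s) * nsq u <= a * nsq u by rewrite ler_wpM2r ?nsq_ge0 ?ltW.
have := nsq_ge0 u; nra.
Qed.

End InnerProduct.

Section Lipschitz.
Variables (R : realType) (V W : lmodType R) (ipV : V -> V -> R) (ipW : W -> W -> R).
Hypothesis HV : ip_axioms ipV.
Variables (f : V -> W) (c : R).
Hypotheses (c0 : 0 <= c) (f_lip : forall v w, nsq ipW (f v - f w) <= c * nsq ipV (v - w)).

Lemma lipschitz_near v e : 0 < e -> exists d, 0 < d /\ forall w,
  Num.sqrt (ipV (v - w) (v - w)) < d -> Num.sqrt (ipW (f v - f w) (f v - f w)) < e.
Proof.
move=> e0; have c1 : 0 < c + 1 by rewrite ltr_wpDl.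
have d0 : 0 < e / (c + 1) by rewrite divr_gt0.
exists (e / (c + 1)); split => // w /(sqr_gt_of_sqrtr_lt (nsq_ge0 HV _)) vw.
apply: sqrtr_lt_sqr => //; apply: le_lt_trans (f_lip v w) _.
have de : e / (c + 1) * (c + 1) = e by rewrite mulfVK // lt0r_neq0.
move: de d0 vw; move: (e / (c + 1)) (nsq ipV (v - w)) => d x de d0 vw.
have cx : c * x <= c * d ^+ 2 by rewrite ler_wpM2l // ltW.
rewrite -de; nra.
Qed.

Lemma ip_continuous_on_lipschitz D : ip_continuous_on ipV ipW D f.
Proof.
move=> v _ e e0; have [d [d0 hd]] := lipschitz_near v e0.
by exists d; split => // w _; apply: hd.
Qed.

Lemma ip_closed_preimage A : ip_closed ipW A -> ip_closed ipV (f @^-1` A).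
Proof.
move=> A_closed v v_adh; apply: A_closed => e e0.
have [d [d0 hd]] := lipschitz_near v e0.
by have [s [As vs]] := v_adh d d0; exists (f s); split => //; apply: hd.
Qed.

End Lipschitz.

Section Product.
Variables (R : realType) (V : lmodType R) (ip : V -> V -> R) (k : nat).
Hypothesis H : ip_axioms ip.
Local Notation ipk := (@ipn _ _ ip k).

Lemma ipn_axioms : ip_axioms ipk.
Proof.
split.
- by move=> x y; apply: eq_bigr => i _; rewrite ipC.
- move=> a x y z; rewrite /ipn mulr_sumr -big_split /=.
  by apply: eq_bigr => i _; rewrite ipL.
- by move=> x; apply: sumr_ge0 => i _; apply: nsq_ge0.
- move=> x x0; apply/funext => i; apply: (nsq_eq0 H).
  exact: (psumr_eq0P (fun j _ => nsq_ge0 H (x j)) x0).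
Qed.

Lemma nsq_coord_le (z : 'I_k -> V) i : nsq ip (z i) <= nsq ipk z.
Proof. by rewrite /nsq /ipn (bigD1 i) //= lerDl sumr_ge0 // => j _; apply: nsq_ge0. Qed.

Lemma ipn_complete : ip_complete ip -> ip_complete ipk.
Proof.
move=> complete u u_cauchy.
have coord_cvg i : exists li, ip_cvg ip (u^~ i) li.
  apply: complete => e e0; have [N hN] := u_cauchy e e0; exists N => m j Nm Nj.
  exact: le_lt_trans (nsq_coord_le (u m - u j) i) (hN m j Nm Nj).
have [l hl] := choice coord_cvg.
exists l => e e0; have ek : 0 < e / k.+1%:R by rewrite divr_gt0.
have [N hN] := choice (fun i => hl i _ ek).
exists (\max_i N i) => m Nm; apply: (@le_lt_trans _ _ (\sum_(i < k) e / k.+1%:R)).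
  by apply: ler_sum => i _; apply/ltW/hN; exact: leq_trans (leq_bigmax i) Nm.
rewrite sumr_const card_ord -[_ *+ k]mulr_natr -mulrA gtr_pMr // ltr_pdivrMl ?ltr0Sn //.
by rewrite mulr1 ltr_nat ltnSn.
Qed.

Lemma orth_proj_diag (S : set V) (z : 'I_k -> V) c : (0 < k)%N ->
  orth_proj ip S (k%:R^-1 *: \sum_i z i) c ->
  orth_proj ipk [set y | exists w, S w /\ forall i, y i = w] z (fun _ => c).
Proof.
move=> k0 [Sc orth]; split; first by exists c.
move=> y [w [Sw yw]].
rewrite /ipn (eq_bigr (fun i => ip (z i - c) w)) => [|i _]; last by rewrite yw.
have -> : \sum_i ip (z i - c) w = ip (k%:R *: (k%:R^-1 *: \sum_i z i - c)) w.
  rewrite -ip_suml // sumrB sumr_const card_ord scalerBr scalerA divff ?scale1r.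
    by rewrite scaler_nat.
  by rewrite pnatr_eq0 -lt0n.
by rewrite ipZl // orth // mulr0.
Qed.

End Product.

Section HilbertSpace.
Variables (R : realType) (X : completeNormedModType R) (ip : X -> X -> R).
Hypothesis Hip : inner_product ip.

Lemma ip_axioms_of_inner_product : ip_axioms ip.
Proof.
case: Hip => ipC ipL ip_ge0 ip_norm; split => // x x0; apply/normr0_eq0.
by rewrite ip_norm x0 sqrtr0.
Qed.

Lemma nsq_norm (x : X) : nsq ip x = `|x| ^+ 2.
Proof. by case: Hip => _ _ ip_ge0 ip_norm; rewrite ip_norm sqr_sqrtr. Qed.

Lemma ip_complete_of_inner_product : ip_complete ip.
Proof.
move=> u u_cauchy.
have /cauchy_cvgP u_cvg : cauchy (u @ \oo).
  apply: cauchy_exP => e e0; have [N hN] := u_cauchy _ (exprn_gt0 2 e0).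
  exists (u N), N => // m /= Nm; rewrite -ball_normE /=.
  by have := hN N m (leqnn N) Nm; rewrite nsq_norm ltr_pXn2r ?nnegrE // ltW.
exists (lim (u @ \oo)) => e e0.
have se0 : 0 < Num.sqrt e by rewrite sqrtr_gt0.
have [N _ hN] := (proj1 (cvgrPdist_lt _ _) u_cvg) _ se0.
exists N => m /hN /=; rewrite nsq_norm distrC => h.
by rewrite -(sqr_sqrtr (ltW e0)) ltr_pXn2r ?nnegrE ?sqrtr_ge0.
Qed.

Lemma ip_closed_of_closed (S : set X) : closed S -> ip_closed ip S.
Proof.
move=> S_closed v v_adh; apply: S_closed => B /nbhs_ballP [e /= e0 eB].
have [s [Ss vs]] := v_adh e e0; exists s; split => //; apply: eB.
by rewrite -ball_normE /=; case: Hip => _ _ _ ->.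
Qed.

End HilbertSpace.

Section Coordinates.
Variables (Y : zmodType) (m : nat).
Implicit Types (f g : 'I_m -> Y).

Lemma hcoordE f (i : 'I_m) : hcoord f i.+1 = f i.
Proof. by rewrite /hcoord /= valK. Qed.

Lemma hcoord_ord f j (lt_j_m : (j.-1 < m)%N) : hcoord f j = f (Ordinal lt_j_m).
Proof.
rewrite /hcoord; case: insubP => [i _ ij|]; last by rewrite lt_j_m.
by congr f; apply: val_inj.
Qed.

Lemma hcoordB f g j : hcoord (f - g) j = hcoord f j - hcoord g j.
Proof. by rewrite /hcoord; case: insubP => [i _ _|_] //; rewrite subr0. Qed.

Lemma hcoord_cst (w : Y) j : (j.-1 < m)%N -> hcoord (fun _ : 'I_m => w) j = w.
Proof. by move=> lt_j_m; rewrite (hcoord_ord _ lt_j_m). Qed.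

(* coordinates are 1-based in [hcoord]: for [i : 'I_m], [hcoord f i] is [f] at index [i - 1] *)
Definition Psi_inv f : 'I_m -> Y :=
  fun i => f i - (if i : nat is 0 then 0 else hcoord f i).

Lemma hcoord_Psi_inv f j : (j < m)%N ->
  hcoord (Psi_inv f) j.+1 = hcoord f j.+1 - (if j is 0 then 0 else hcoord f j).
Proof. by move=> lt_j_m; rewrite !(hcoord_ord (j := j.+1) _ lt_j_m). Qed.

Lemma Psi_invB f g i : Psi_inv (f - g) i = Psi_inv f i - Psi_inv g i.
Proof.
rewrite /Psi_inv; case: (nat_of_ord i) => [|j]; first by rewrite !subr0.
rewrite hcoordB /= !opprB addrACA [RHS]addrACA; congr (_ + _); exact: addrC.
Qed.

Lemma PsiB f g : Psi (f - g) = Psi f - Psi g.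
Proof. by apply/funext => i; rewrite /Psi sumrB. Qed.

Lemma Psi0 f (i : 'I_m) : i = 0 :> nat -> Psi f i = f i.
Proof. by move=> i0; rewrite /Psi (big_pred1 i) // => l /=; rewrite -val_eqE /= i0; lia. Qed.

Lemma PsiS f (i : 'I_m) j : i = j.+1 :> nat -> Psi f i = hcoord (Psi f) j.+1 + f i.
Proof.
move=> ij; have lt_j_m : (j < m)%N by have := ltn_ord i; lia.
rewrite (hcoord_ord (j := j.+1) _ lt_j_m) /Psi (bigD1 i) //= addrC; congr (_ + _).
by apply: eq_bigl => l; rewrite -val_eqE /= ij; lia.
Qed.

Lemma PsiK : cancel (@Psi Y m) Psi_inv.
Proof.
move=> f; apply/funext => i; rewrite /Psi_inv.
case ij : (nat_of_ord i) => [|j]; first by rewrite subr0 Psi0.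
by rewrite (PsiS _ ij) -ij addrC addKr.
Qed.

Lemma Psi_invK : cancel Psi_inv (@Psi Y m).
Proof.
move=> f; apply/funext => -[i lt_i_m]; elim: i lt_i_m => [|j IH] lt_j_m.
  by rewrite Psi0 // /Psi_inv subr0.
rewrite (PsiS _ (i := Ordinal lt_j_m) (j := j)) //.
have lt_j_m' : (j < m)%N by lia.
rewrite (hcoord_ord (j := j.+1) _ lt_j_m') /= IH /Psi_inv /=.
by rewrite (hcoord_ord (j := j.+1) _ lt_j_m') addrC subrK.
Qed.

End Coordinates.

Section FixedPoints.
Variables (R : realType) (V : lmodType R) (ip : V -> V -> R).
Hypothesis H : ip_axioms ip.
Variables (n : nat) (U : nat -> set V) (P : nat -> V -> V).
Hypothesis n3 : (3 <= n)%N.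
Hypothesis P_spec : forall i v p, (1 <= i <= n)%N ->
  P i v = p <-> U i p /\ hperp ip (U i) (v - p).

Let P_in i v : (1 <= i <= n)%N -> U i (P i v).
Proof. by move=> i1n; have [] := (P_spec v (P i v) i1n).1 erefl. Qed.

Definition perp_increments (b : 'I_n.-1 -> V) :=
  (forall j, (1 <= j < n)%N -> hperp ip (U j) (hcoord (Psi_inv b) j)) /\
  hperp ip (U n) (hcoord b n.-1).

Variable z : 'I_n.-1 -> V.
Local Notation zz := (hcoord z).
Local Notation x := (hcoord (Mmap P z)).

Lemma Mmap_coord j : (1 <= j < n)%N -> x j = Mseq P zz j.
Proof.
move=> j1n; have lt_j_n : (j.-1 < n)%N by lia.
rewrite (hcoord_ord _ lt_j_n) /Mmap /= prednK; last by lia.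
by rewrite ifN_eq; [case: (j) j1n => [|[|]] | lia].
Qed.

Lemma Mmap_first : x 1 = P 1 (zz 1).
Proof. by rewrite Mmap_coord //; lia. Qed.

Lemma Mmap_succ j : (1 <= j)%N -> (j.+1 < n)%N -> x j.+1 = P j.+1 (x j + zz j.+1 - zz j).
Proof. by move=> j1 jn; rewrite !Mmap_coord; [case: j j1 jn | lia | lia]. Qed.

Lemma Mmap_last : x n = P n (x 1 + x n.-1 - zz n.-1).
Proof.
have lt_n_n : (n.-1 < n)%N by lia.
by rewrite (hcoord_ord _ lt_n_n) /Mmap /= prednK ?eqxx ?Mmap_coord //; lia.
Qed.

Lemma Mmap_in j : (1 <= j <= n)%N -> U j (x j).
Proof.
move=> j1n; have [lt_j_n|nj] := ltnP j n.
  rewrite Mmap_coord; last by lia.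
  by case: j j1n lt_j_n => [|[|j]] // j1n _; apply: P_in.
have -> : j = n by lia.
by rewrite Mmap_last; apply: P_in; lia.
Qed.

Lemma Tmap_fixP : Tmap P z = z <-> forall j, (1 <= j <= n)%N -> x j = x 1.
Proof.
have step : Tmap P z = z <-> forall i : 'I_n.-1, x i.+2 = x i.+1.
  split => [Tz i | x_eq].
    apply/eqP; rewrite -subr_eq0 -(addKr (z i) (_ - _)).
    by rewrite [- _ + _]addrC -/(Tmap P z i) Tz subrr.
  by apply/funext => i; rewrite /Tmap x_eq subrr addr0.
rewrite step; split => [x_eq j /andP[j1 jn] | x_eq i].
  elim: j j1 jn => [//|[//|j] IH] _ jn.
  have lt_j_n : (j < n.-1)%N by lia.
  by rewrite (x_eq (Ordinal lt_j_n)) IH //; lia.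
by rewrite !x_eq //; have := ltn_ord i; lia.
Qed.

Section Constant.
Variable w : V.
Local Notation b := (z - fun=> w).

Let b_coord j : (1 <= j < n)%N -> hcoord b j = zz j - w.
Proof. by move=> j1n; rewrite hcoordB hcoord_cst //; lia. Qed.

(* the increments of [b] in the shape in which they occur in [P_spec] *)
Let increment1 : hcoord (Psi_inv b) 1 = zz 1 - w.
Proof. by rewrite hcoord_Psi_inv ?b_coord ?subr0 //; lia. Qed.

Let incrementS j : (j.+2 < n)%N -> hcoord (Psi_inv b) j.+2 = (w + zz j.+2 - zz j.+1) - w.
Proof.
move=> jn; rewrite hcoord_Psi_inv ?b_coord; try lia.
by rewrite opprB addrA subrK addrAC [w + _]addrC addrK.
Qed.

Let last_increment : hcoord b n.-1 = - ((w + w - zz n.-1) - w).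
Proof. by rewrite b_coord; [rewrite addrAC addrK opprB | lia]. Qed.

Lemma Mmap_const_perp : (forall j, (1 <= j <= n)%N -> x j = w) ->
  (forall i, (1 <= i <= n)%N -> U i w) /\ perp_increments b.
Proof.
move=> xw; split=> [i i1n|]; first by rewrite -(xw i i1n); exact: Mmap_in.
have perp_w j v : (1 <= j <= n)%N -> P j v = w -> hperp ip (U j) (v - w).
  by move=> j1n /(P_spec _ _ j1n) [].
split=> [[//|[|j]] j1n|].
- by rewrite increment1; apply: perp_w; [lia | rewrite -Mmap_first xw //; lia].
- rewrite incrementS; last by lia.
  apply: perp_w; first lia.
  transitivity (x j.+2); last by apply: xw; lia.
  by rewrite Mmap_succ ?(xw j.+1) //; lia.
rewrite last_increment; apply: subspN (hperp_subsp H _) _.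
apply: perp_w; first lia.
transitivity (x n); last by apply: xw; lia.
by rewrite Mmap_last (xw 1) ?(xw n.-1) //; lia.
Qed.

Lemma perp_Mmap_const : (forall i, (1 <= i <= n)%N -> U i w) -> perp_increments b ->
  forall j, (1 <= j <= n)%N -> x j = w.
Proof.
move=> Zw [incr last_perp].
have w_of_perp j v : (1 <= j <= n)%N -> hperp ip (U j) (v - w) -> P j v = w.
  by move=> j1n perp; apply/P_spec => //; split => //; apply: Zw.
have x_lt j : (1 <= j < n)%N -> x j = w.
  elim: j => [//|[|j] IH] j1n.
    rewrite Mmap_first; apply: w_of_perp; first lia.
    by rewrite -increment1; apply: incr.
  rewrite Mmap_succ ?IH; try lia.
  apply: w_of_perp; first lia.
  by rewrite -incrementS; [apply: incr | lia].
move=> j j1n; have [lt_j_n|nj] := ltnP j n; first by apply: x_lt; lia.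
have -> : j = n by lia.
rewrite Mmap_last !x_lt; try lia.
apply: w_of_perp; first lia.
by rewrite -[_ - w]opprK -last_increment; apply: subspN (hperp_subsp H _) _.
Qed.

End Constant.

End FixedPoints.

Section PsiOnProducts.
Variables (R : realType) (V : lmodType R) (ip : V -> V -> R) (k : nat).
Hypothesis H : ip_axioms ip.
Local Notation ipk := (@ipn _ _ ip k).
Let Hk : ip_axioms ipk := ipn_axioms k H.

Lemma nsq_hcoord_le (d : 'I_k -> V) j : nsq ip (hcoord d j) <= nsq ipk d.
Proof.
rewrite /hcoord; case: insubP => [i _ _|_]; first exact: nsq_coord_le.
by rewrite nsq0 // (nsq_ge0 Hk).
Qed.

Lemma nsq_Psi_inv_le (d : 'I_k -> V) i : nsq ip (Psi_inv d i) <= 4 * nsq ipk d.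
Proof.
rewrite /Psi_inv; set c := (if _ is 0 then _ else _).
have c_le : nsq ip c <= nsq ipk d.
  by rewrite /c; case: (nat_of_ord i) => [|j]; rewrite ?nsq0 ?nsq_hcoord_le ?(nsq_ge0 Hk).
have := nsqD_le H (d i) (- c); rewrite nsqN //.
have := nsq_coord_le H d i; lra.
Qed.

Lemma PsiL (a : R) (v w : 'I_k -> V) : Psi (a *: v + w) = a *: Psi v + Psi w.
Proof. by apply/funext => i; rewrite /Psi big_split /= -scaler_sumr. Qed.

Lemma nsq_Psi_le (d : 'I_k -> V) : nsq ipk (Psi d) <= k%:R * 2 ^+ k * nsq ipk d.
Proof.
have Psi_le i : nsq ip (Psi d i) <= 2 ^+ k * nsq ipk d.
  apply: le_trans (nsq_sum_le H _ _ _) _.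
  have -> : size (index_enum 'I_k) = k by rewrite -[index_enum _]enumT size_enum_ord.
  rewrite ler_wpM2l ?exprn_ge0 // [leRHS]/nsq /ipn big_mkcond /=.
  apply: ler_sum => j _.
  by case: ifP => _; rewrite ?nsq_ge0.
apply: le_trans (ler_sum _ (fun i _ => Psi_le i)) _.
by rewrite sumr_const card_ord -mulrA mulr_natl.
Qed.

End PsiOnProducts.

Section Main.
Variables (R : realType) (X : completeNormedModType R) (ip : X -> X -> R).
Variables (n : nat) (U : nat -> set X).
Hypotheses (Hip : inner_product ip) (n3 : (3 <= n)%N)
  (U_closed : forall i, (1 <= i <= n)%N -> hclosed_subspace (U i)).

Local Notation P := (fun i => hproj ip (U i)).
Local Notation Z := [set x | forall i, (1 <= i <= n)%N -> U i x].
Local Notation ipX := (@ipn R X ip n.-1).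
Local Notation domPsi :=
  [set y : 'I_n.-1 -> X | forall i : 'I_n.-1, hperp ip (U i.+1) (y i)].
Local Notation ranPsi := ((@Psi X n.-1) @` domPsi).
Local Notation E := [set z : 'I_n.-1 -> X | ranPsi z /\
  forall i : 'I_n.-1, i.+1 = n.-1 -> hperp ip (U n) (z i)].
Local Notation Delta := [set z : 'I_n.-1 -> X | exists w, Z w /\ forall i, z i = w].
Local Notation FixT := [set z : 'I_n.-1 -> X | Tmap P z = z].

Let HX : ip_axioms ip := ip_axioms_of_inner_product Hip.
Let HXn : ip_axioms ipX := ipn_axioms n.-1 HX.
Let X_complete : ip_complete ip := ip_complete_of_inner_product Hip.
Let Xn_complete : ip_complete ipX := ipn_complete HX X_complete.

Let U_subsp i : (1 <= i <= n)%N -> subsp (U i).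
Proof. by move=> i1n; have [] := U_closed i1n. Qed.

Let U_ip_closed i : (1 <= i <= n)%N -> ip_closed ip (U i).
Proof. by move=> i1n; have [_ _ /(ip_closed_of_closed Hip)] := U_closed i1n. Qed.

Lemma hproj_subspaceP i v p : (1 <= i <= n)%N ->
  P i v = p <-> U i p /\ hperp ip (U i) (v - p).
Proof.
move=> i1n; split => [<-|Up]; last exact: hproj_eq (U_subsp i1n) _.
exact: (hprojP HX v X_complete (U_subsp i1n) (U_ip_closed i1n)).
Qed.

Let Z_subsp : subsp Z.
Proof.
split=> [i /U_subsp []//|a x y Zx Zy i i1n].
by have [_] := U_subsp i1n; apply; [apply: Zx | apply: Zy].
Qed.

Let Z_closed : ip_closed ip Z.
Proof. by apply: ip_closedI => i; apply: ip_closedI => /U_ip_closed. Qed.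

Lemma ranPsiE b : ranPsi b <-> forall i : 'I_n.-1, hperp ip (U i.+1) (Psi_inv b i).
Proof.
split=> [[y y_perp <-] i|b_perp]; first by rewrite PsiK.
by exists (Psi_inv b) => //; rewrite Psi_invK.
Qed.

Lemma E_perp_increments b : E b <-> perp_increments ip U b.
Proof.
have lt_n_n : (n.-2 < n.-1)%N by lia.
split=> [[/ranPsiE b_perp b_last]|[b_perp b_last]].
  split=> [j j1n|]; last by rewrite (hcoord_ord _ lt_n_n); apply: b_last => /=; lia.
  have lt_j_n : (j.-1 < n.-1)%N by lia.
  by rewrite (hcoord_ord _ lt_j_n); have := b_perp (Ordinal lt_j_n); rewrite /= prednK //; lia.
split=> [|i i_last]; last first.
  move: b_last; rewrite (hcoord_ord _ lt_n_n); congr (hperp _ _ (b _)).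
  by apply: val_inj => /=; lia.
by apply/ranPsiE => i; rewrite -hcoordE; apply: b_perp; have := ltn_ord i; lia.
Qed.

Lemma FixT_eq : FixT = [set a + b | a in Delta & b in E].
Proof.
apply/seteqP; split => [z /(Tmap_fixP _ n3) x_const | _ [a [w [Zw aw]] [b Eb <-]]].
  set w := hcoord (Mmap P z) 1 in x_const.
  have [Zw /E_perp_increments Eb] := Mmap_const_perp HX n3 hproj_subspaceP x_const.
  exists (fun=> w); first by exists w.
  by exists (z - fun=> w); last rewrite addrC subrK.
have -> : a = fun=> w by apply/funext.
have b_eq : (fun=> w) + b - (fun=> w) = b by rewrite [_ + b]addrC addrK.
apply/(Tmap_fixP _ n3) => j j1n.
have x_const := perp_Mmap_const HX n3 hproj_subspaceP Zw.
by rewrite !x_const ?b_eq; try apply/E_perp_increments; try lia.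
Qed.

Lemma Delta_orth_E a b : Delta a -> E b -> ipX a b = 0.
Proof.
move=> [w [Zw aw]] [[y y_perp <-] _]; rewrite /ipn big1 // => i _.
rewrite aw /Psi ip_sumr // big1 // => j _; rewrite ipC //.
by apply: y_perp; apply: Zw; have := ltn_ord j; lia.
Qed.

Lemma E_sub_sum_perps : E `<=` [set z : 'I_n.-1 -> X | forall i : 'I_n.-1,
  sum_perps ip U i.+1 (z i) /\ (i.+1 = n.-1 -> hperp ip (U n) (z i))].
Proof.
move=> z [[y y_perp yz] z_last] i; split=> [|]; last exact: z_last.
exists (hcoord y); split.
  move=> j /andP[j1 ji]; have lt_j_n : (j.-1 < n.-1)%N by have := ltn_ord i; lia.
  by rewrite (hcoord_ord _ lt_j_n); have := y_perp (Ordinal lt_j_n); rewrite /= prednK.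
rewrite -yz /Psi big_add1 /= (big_nat_widen 0 i.+1 n.-1 xpredT); last by have := ltn_ord i; lia.
by rewrite big_mkord; apply: eq_big => [l|l _]; rewrite ?ltnS ?hcoordE.
Qed.

Let Delta_subsp : subsp Delta.
Proof.
split; first by exists 0; split => //; case: Z_subsp.
move=> a y y' [w [Zw yw]] [w' [Zw' yw']]; exists (a *: w + w').
by split=> [|i]; [case: Z_subsp => _; apply | rewrite -(yw i) -(yw' i)].
Qed.

Let E_subsp : subsp E.
Proof.
have perp_subsp := hperp_subsp HX.
split.
  split; last by move=> i _; case: (perp_subsp (U n)).
  by exists 0; [move=> i; case: (perp_subsp (U i.+1)) | apply/funext => i; rewrite /Psi big1].
move=> a _ _ [[y y_perp <-] y_last] [[y' y'_perp <-] y'_last]; split.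
  by exists (a *: y + y'); [move=> i; case: (perp_subsp (U i.+1)) => _; apply | exact: PsiL].
by move=> i i_last; case: (perp_subsp (U n)) => _; apply; [apply: y_last | apply: y'_last].
Qed.

Lemma ranPsi_closed : ip_closed ipX ranPsi.
Proof.
have -> : ranPsi = [set b | forall i : 'I_n.-1, hperp ip (U i.+1) (Psi_inv b i)].
  by apply/seteqP; split => b /ranPsiE.
apply: ip_closedI => i; have perp_closed := hperp_closed HX (U := U i.+1).
apply: (ip_closed_preimage HXn (f := fun b => Psi_inv b i) (c := 4) _ _ perp_closed) => //.
by move=> v w; rewrite -Psi_invB nsq_Psi_inv_le.
Qed.

Let E_closed : ip_closed ipX E.
Proof.
apply: ip_closed_setI ranPsi_closed _; apply: ip_closedI => i; apply: ip_closedI => _.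
have perp_closed := hperp_closed HX (U := U n).
apply: (ip_closed_preimage HXn (f := fun z => z i) (c := 1) _ _ perp_closed) => //.
by move=> v w; rewrite mul1r; apply: nsq_coord_le.
Qed.

Lemma Psi_continuous : ip_continuous_on ipX ipX domPsi (@Psi X n.-1).
Proof.
apply: (ip_continuous_on_lipschitz HXn (c := n.-1%:R * 2 ^+ n.-1)).
  by rewrite mulr_ge0 ?exprn_ge0.
by move=> v w; rewrite -PsiB nsq_Psi_le.
Qed.

Lemma hproj_FixT z :
  hproj ipX FixT z = (fun=> hproj ip Z (n.-1%:R^-1 *: \sum_(i < n.-1) z i)) + hproj ipX E z.
Proof.
rewrite FixT_eq; apply: (hproj_eq HXn (subsp_sum Delta_subsp E_subsp)).
apply: (orth_proj_sum HXn); first exact: Delta_orth_E.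
  by apply: (orth_proj_diag HX); [lia | exact: (hprojP HX _ X_complete Z_subsp Z_closed)].
exact: (hprojP HXn _ Xn_complete E_subsp E_closed).
Qed.

Lemma hproj_FixT_first z :
  P 1 (hcoord (hproj ipX FixT z) 1) = hproj ip Z (n.-1%:R^-1 *: \sum_(i < n.-1) z i).
Proof.
have lt_0_n : (0 < n.-1)%N by lia.
have [Zc _] := hprojP HX (n.-1%:R^-1 *: \sum_(i < n.-1) z i) X_complete Z_subsp Z_closed.
have [[/ranPsiE pe_perp _] _] := hprojP HXn z Xn_complete E_subsp E_closed.
rewrite hproj_FixT (hcoord_ord (j := 1) _ lt_0_n) /=.
have one_n : (1 <= 1 <= n)%N by lia.
apply/(hproj_subspaceP _ _ one_n); split; first exact: Zc.
by rewrite addrC addKr; have := pe_perp (Ordinal lt_0_n); rewrite /Psi_inv subr0.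
Qed.

End Main.

Theorem mainTheorem3 (R : realType) (X : completeNormedModType R)
  (ip : X -> X -> R) (n : nat) (U : nat -> set X) :
  inner_product ip ->
  (3 <= n)%N ->
  (forall i, (1 <= i <= n)%N -> hclosed_subspace (U i)) ->
  let P := fun i => hproj ip (U i) in
  let Z := [set x | forall i, (1 <= i <= n)%N -> U i x] in
  let ipX := @ipn R X ip n.-1 in
  let domPsi := [set y : 'I_n.-1 -> X | forall i : 'I_n.-1, hperp ip (U i.+1) (y i)] in
  let ranPsi := (@Psi X n.-1) @` domPsi in
  let E := [set z : 'I_n.-1 -> X | ranPsi z /\
              forall i : 'I_n.-1, i.+1 = n.-1 -> hperp ip (U n) (z i)] in
  let Delta := [set z : 'I_n.-1 -> X | exists w, Z w /\ forall i, z i = w] in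
  let FixT := [set z : 'I_n.-1 -> X | Tmap P z = z] in
  (linear_on domPsi (@Psi X n.-1) /\
   ip_continuous_on ipX ipX domPsi (@Psi X n.-1) /\
   ip_closed ipX ranPsi) /\
  (FixT = [set a + b | a in Delta & b in E] /\
   (forall a b, Delta a -> E b -> ipX a b = 0) /\
   E `<=` [set z : 'I_n.-1 -> X | forall i : 'I_n.-1,
             sum_perps ip U i.+1 (z i) /\
             (i.+1 = n.-1 -> hperp ip (U n) (z i))] /\
   (forall z : 'I_n.-1 -> X,
      let zbar := ((n.-1)%:R)^-1 *: \sum_(i < n.-1) z i in
      hproj ipX FixT z = (fun _ => hproj ip Z zbar) + hproj ipX E z /\
      P 1%N (hcoord (hproj ipX FixT z) 1%N) = hproj ip Z zbar)).
Proof.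
move=> Hip n3 U_closed P Z ipX domPsi ranPsi E Delta FixT.
split.
  split; first by move=> a v w _ _; apply: PsiL.
  by split; [exact: Psi_continuous | exact: ranPsi_closed].
split; first exact: FixT_eq.
split; first exact: Delta_orth_E.
split; first exact: E_sub_sum_perps.
by move=> z zbar; split; [exact: hproj_FixT | exact: hproj_FixT_first].
Qed.
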